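(* Let $G$ be a finite graph with $n\ge1$ vertices, each of degree at least $1$. Take $r=n+1$, $V=\mathbb{C}^{n+1}$, $B=I_{n+1}$, $x_j=e^{2\pi\sqrt{-1}\,j/n}$ for $j=1,\dots,n$, and $t=0$, and let $\mathcal{A}=\{A_1,A_2,\dots\}$ be given by $A_1^i=t$ if $i=n+1$ and $0$ otherwise, and for $d\ge2$: $A_d^{i_1\dots i_d}=x_i$ if $(i_1,\dots,i_d)$ is a permutation of $(i,i,n+1,\dots,n+1)$ with $i\in\{1,\dots,n\}$, $=t$ if $(i_1,\dots,i_d)=(n+1,\dots,n+1)$, and $0$ otherwise. Then the number of Hamiltonian cycles of $G$ equals $\frac1n\,\mathcal{F}_{\mathcal{A},I_{n+1}}(G)$.
   Context: $\mathcal{F}_{\mathcal{A},B}(G)=\sum_{c:H\to\{1,\dots,r\}}\prod_{\{h,h'\}\in E(G)}B_{c(h)c(h')}\prod_{k}A_{d_k}^{c(h_{k,1})\dots c(h_{k,d_k})}$, where $H$ is the set of half-edges of $G$ (two per edge, loops included) and $h_{k,1},\dots,h_{k,d_k}$ are the half-edges at vertex $v_k$ of degree $d_k$; i.e. a copy of $A_{d_k}$ is placed at each vertex and contracted along edges using $B$. A cycle of $G$ is a $2$-valent subgraph (every vertex in it has degree $2$ within it, loops counted twice); a Hamiltonian cycle is a connected cycle with $n=|V(G)|$ edges. *)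

From mathcomp Require Import all_boot all_algebra.
From mathcomp Require Import all_classical all_reals all_analysis.
From mathcomp Require Import complex.
Set Implicit Arguments. Unset Strict Implicit. Unset Printing Implicit Defensive.
Import GRing.Theory Num.Theory.
Local Open Scope ring_scope.

(* A finite multigraph (loops and parallel edges allowed) on vertex set 'I_n:
   a finite edge type E and, for each edge, its two end vertices.
   Each edge e has two half-edges (e,false) and (e,true); a loop has both
   half-edges at the same vertex. *)

Definition hend (n : nat) (E : finType) (ends : E -> 'I_n * 'I_n)
  (h : E * bool) : 'I_n :=
  if h.2 then (ends h.1).2 else (ends h.1).1.

(* the half-edges at vertex v, listed in a fixed order h_{v,1},...,h_{v,d_v} *)
Definition halfs_at (n : nat) (E : finType) (ends : E -> 'I_n * 'I_n)
  (v : 'I_n) : seq (E * bool) :=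
  [seq h <- enum {: E * bool} | hend ends h == v].

(* degree of v (loops counted twice) *)
Definition deg (n : nat) (E : finType) (ends : E -> 'I_n * 'I_n) (v : 'I_n) : nat :=
  size (halfs_at ends v).

(* The partition function F_{A,B}(G) with r colours:
   sum over colourings c of half-edges of
   prod_{edges} B_{c(h) c(h')} * prod_{vertices v} A_{d_v}^{c(h_{v,1})...c(h_{v,d_v})}.
   A d s is the entry of the tensor A_d at the multi-index s (a seq of length d). *)
Definition partfun (C : comPzRingType) (r n : nat) (E : finType)
  (ends : E -> 'I_n * 'I_n) (B : 'M[C]_r) (A : nat -> seq 'I_r -> C) : C :=
  \sum_(c : {ffun E * bool -> 'I_r})
     (\prod_(e : E) B (c (e, false)) (c (e, true))) *
     \prod_(v : 'I_n) A (deg ends v) [seq c h | h <- halfs_at ends v].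

Definition xroot (R : realType) (n j : nat) : R[i] :=
  let th : R := pi *+ 2 * j%:R / n%:R in (cos th +i* sin th)%C.

(* The tensors A_d of the corollary, with colours 'I_n.+1; the colour ord_max
   plays the role of n+1 and colour i (val i < n) plays the role of i+1.
   A_d is only used for d >= 1 (A_0 set to 0, never used). *)
Definition A_ham (R : realType) (n : nat) (t : R[i]) (d : nat)
  (s : seq 'I_n.+1) : R[i] :=
  if d == 0%N then 0
  else if d == 1%N then (if s == [:: ord_max] then t else 0)
  else match [pick i : 'I_n.+1 | (i != ord_max) &&
                perm_eq s [:: i, i & nseq (d - 2) ord_max]] with
       | Some i => xroot R n (val i).+1
       | None => if s == nseq d ord_max then t else 0
       end.

Definition deg_in (n : nat) (E : finType) (ends : E -> 'I_n * 'I_n)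
  (S : {set E}) (v : 'I_n) : nat :=
  #|[set h : E * bool | (h.1 \in S) && (hend ends h == v)]|.

Definition is_cycle (n : nat) (E : finType) (ends : E -> 'I_n * 'I_n)
  (S : {set E}) : bool :=
  [forall v : 'I_n, (deg_in ends S v == 0%N) || (deg_in ends S v == 2%N)].

Definition adjS (n : nat) (E : finType) (ends : E -> 'I_n * 'I_n)
  (S : {set E}) : rel 'I_n :=
  fun u v => [exists e in S, (ends e == (u, v)) || (ends e == (v, u))].

Definition sub_connected (n : nat) (E : finType) (ends : E -> 'I_n * 'I_n)
  (S : {set E}) : bool :=
  [forall u : 'I_n, forall v : 'I_n,
     ((0 < deg_in ends S u)%N && (0 < deg_in ends S v)%N) ==>
       connect (adjS ends S) u v].

Definition hamiltonian (n : nat) (E : finType) (ends : E -> 'I_n * 'I_n)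
  (S : {set E}) : bool :=
  [&& is_cycle ends S, sub_connected ends S & #|S| == n].

From mathcomp Require Import all_boot all_algebra.
From mathcomp Require Import all_classical all_reals all_analysis.
From mathcomp Require Import complex.
From mathcomp Require Import ring lra zify.
Import GRing.Theory Num.Theory.
Local Open Scope ring_scope.

(* With B = I only colourings giving both halves of every edge the same colour
   contribute, so they are edge colourings; call S the set of edges not
   coloured n+1.  Since t = 0, the tensor A forces every vertex to meet exactly
   two edges of S, both of one colour i, and then contributes x_i.  So S is
   2-regular and its connected components are monochromatic.  Shifting the
   colours 1..n cyclically on one component with k vertices multiplies the
   weight by w^k, w = e^(2 pi i/n); if S is disconnected then 0 < k < n, so
   w^k <> 1 and the colourings with support S cancel.  If S is a Hamiltonian
   cycle, its n monochromatic colourings each have weight x_i^n = 1. *)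

Section RootOfUnity.
Variable R : realType.

Definition expi (x : R) : R[i] := (cos x +i* sin x)%C.

Lemma expiD x y : expi (x + y) = expi x * expi y.
Proof.
rewrite /expi cosD sinD; apply/eqP; rewrite eq_complex /=.
by rewrite eqxx addrC eqxx.
Qed.

Lemma expiMn x k : expi (x *+ k) = expi x ^+ k.
Proof.
elim: k => [|k IHk]; first by rewrite /expi cos0 sin0.
by rewrite mulrS expiD IHk exprS.
Qed.

Lemma xrootE n j : xroot R n j = xroot R n 1 ^+ j.
Proof.
rewrite -[LHS]/(expi _) -[xroot _ _ 1]/(expi _) -expiMn mulr1n.
by congr expi; rewrite mulr1 mulrAC mulr_natr.
Qed.

Lemma xroot1_expr_neq1 n k : (0 < k < n)%N -> xroot R n 1 ^+ k != 1.
Proof.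
case/andP=> k_gt0 lt_kn; have n_gt0 : (0 < n)%N := ltn_trans k_gt0 lt_kn.
rewrite -xrootE -[xroot _ _ _]/(expi _); set th := (X in expi X).
have half_th_bounds : 0 < th / 2 < pi.
  have -> : th / 2 = pi * (k%:R / n%:R).
    by rewrite /th mulr2n; field; rewrite pnatr_eq0 -lt0n.
  rewrite mulr_gt0 ?pi_gt0 ?divr_gt0 ?ltr0n //=.
  by rewrite gtr_pMr ?pi_gt0 // ltr_pdivrMr ?ltr0n // mul1r ltr_nat.
have sin_pos := sin_gt0_pi half_th_bounds.
apply/negP => /eqP [] cos_th1 _.
have : cos ((th / 2) *+ 2) = 1 by rewrite -mulr_natr divfK ?pnatr_eq0.
rewrite cos_mulr2n cos2sin2; have := exprn_gt0 2 sin_pos; lra.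
Qed.

Lemma xroot1_primitive n : (0 < n)%N -> n.-primitive_root (xroot R n 1).
Proof.
move=> n_gt0; rewrite /primitive_root_of_unity n_gt0; apply/forallP => i.
rewrite unity_rootE; have [-> | ne_in] := eqVneq i.+1 n.
  rewrite -xrootE -[xroot _ _ _]/(expi _) mulfK ?pnatr_eq0 -?lt0n //.
  by rewrite /expi cos2pi sin2pi; apply/eqP/eqP.
rewrite (negbTE (@xroot1_expr_neq1 n i.+1 _)) //=.
by move: ne_in (ltn_ord i); lia.
Qed.

End RootOfUnity.

Section HamTensor.
Context {R : realType} {n : nat}.
Hypothesis n_gt0 : (0 < n)%N.

Local Notation mx := (@ord_max n).
Local Notation om := (xroot R n 1).
Local Notation A := (@A_ham R n 0).

Definition pair_pattern d (s : seq 'I_n.+1) (i : 'I_n.+1) :=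
  (i != mx) && perm_eq s [:: i, i & nseq (d - 2) mx].

Lemma pair_pattern_uniq d s i j :
  pair_pattern d s i -> pair_pattern d s j -> i = j.
Proof.
move=> /andP[i_ne_mx s_i] /andP[_ s_j].
have : i \in [:: j, j & nseq (d - 2) mx].
  by rewrite -(perm_mem s_j) (perm_mem s_i) mem_head.
rewrite !inE mem_nseq => /or3P[/eqP // | /eqP // | /andP[_ i_mx]].
by rewrite i_mx in i_ne_mx.
Qed.

(* The pattern colour is unique, so the sum has at most one term; written as a
   sum, A is readily reindexed along [rot_colour]. *)
Lemma A_hamE d s :
  A d s = if (1 < d)%N then \sum_(i | pair_pattern d s i) xroot R n i.+1 else 0.
Proof.
rewrite /A_ham; case: d => [|[|d]] //=; first by rewrite if_same.
case: pickP => [i s_i | no_pattern]; last by rewrite if_same big_pred0.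
rewrite (big_pred1 i) // => j; apply/idP/eqP => [s_j | ->] //.
exact: pair_pattern_uniq s_j s_i.
Qed.

Lemma neq_ord_max (i : 'I_n.+1) : (i != mx) = (i < n)%N.
Proof. by rewrite -val_eqE /= ltn_neqAle -ltnS ltn_ord andbT. Qed.

Definition rot_colour (i : 'I_n.+1) : 'I_n.+1 :=
  if i == mx then mx else inord (i.+1 %% n)%N.

Lemma rot_colour_max : rot_colour mx = mx.
Proof. by rewrite /rot_colour (eqxx mx). Qed.

Lemma rot_colour_val i : i != mx -> rot_colour i = (i.+1 %% n)%N :> nat.
Proof.
move=> /negbTE i_ne_mx.
by rewrite /rot_colour i_ne_mx inordK // ltnS ltnW ?ltn_pmod.
Qed.

Lemma rot_colour_eq_max i : (rot_colour i == mx) = (i == mx).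
Proof.
have [-> | i_ne_mx] := eqVneq i mx; first by rewrite rot_colour_max !eqxx.
by apply: negbTE; rewrite neq_ord_max rot_colour_val // ltn_pmod.
Qed.

Lemma rot_colour_inj : injective rot_colour.
Proof.
move=> i j eq_ij; have := rot_colour_eq_max i; rewrite eq_ij rot_colour_eq_max.
have [-> /eqP // | i_ne_mx /negbT j_ne_mx] := eqVneq i mx.
move: eq_ij => /(congr1 (@nat_of_ord _)); rewrite !rot_colour_val // => eq_mod.
apply: val_inj; move: i_ne_mx j_ne_mx eq_mod.
rewrite !neq_ord_max => i_lt_n j_lt_n /eqP.
by rewrite -addn1 -(addn1 j) eqn_modDr !modn_small // => /eqP.
Qed.

Lemma xroot_rot_colour i :
  i != mx -> xroot R n (rot_colour i).+1 = om * xroot R n i.+1.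
Proof.
move=> i_ne_mx; rewrite rot_colour_val //.
rewrite (xrootE R n (_ %% n).+1) (xrootE R n i.+1) exprS.
by rewrite (prim_expr_mod (xroot1_primitive R n n_gt0)).
Qed.

Lemma A_ham_rot d s : A d (map rot_colour s) = om * A d s.
Proof.
rewrite !A_hamE; case: ifP => _; last by rewrite mulr0.
rewrite mulr_sumr (reindex_inj rot_colour_inj); apply: eq_big => [i | i].
  rewrite /pair_pattern rot_colour_eq_max; congr (_ && _).
  have -> : [:: rot_colour i, rot_colour i & nseq (d - 2) mx] =
            map rot_colour [:: i, i & nseq (d - 2) mx].
    by rewrite /= map_nseq rot_colour_max.
  by apply/idP/idP => [/(perm_map_inj rot_colour_inj) | /(perm_map rot_colour)].
by case/andP; rewrite rot_colour_eq_max => i_ne_mx _; rewrite xroot_rot_colour.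
Qed.

End HamTensor.

Definition edge_constant {E : finType} {r} (c : {ffun E * bool -> 'I_r}) :=
  [forall e, c (e, false) == c (e, true)].

Section Multigraph.
Context {n : nat} {E : finType} (ends : E -> 'I_n * 'I_n).

Lemma mem_halfs_at v h : (h \in halfs_at ends v) = (hend ends h == v).
Proof. by rewrite mem_filter mem_enum andbT. Qed.

Lemma deg_in_count S v :
  deg_in ends S v = count (fun h => h.1 \in S) (halfs_at ends v).
Proof.
rewrite /deg_in cardsE cardE /enum_mem size_filter /halfs_at count_filter enumT.
by apply: eq_count => h; rewrite !inE.
Qed.

Lemma sum_deg_in S : (\sum_v deg_in ends S v = 2 * #|S|)%N.
Proof.
have -> : (2 * #|S| = #|[set h : E * bool | h.1 \in S]|)%N.
  have -> : [set h : E * bool | h.1 \in S] = finset.setX S [set: bool].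
    by apply/setP => -[e b]; rewrite !inE andbT.
  by rewrite cardsX cardsT card_bool mulnC.
rewrite -sum1_card (partition_big (hend ends) predT) //=.
apply: eq_bigr => v _; rewrite /deg_in -sum1_card.
by apply: eq_bigl => h; rewrite !inE.
Qed.

Lemma hamiltonianE S :
  hamiltonian ends S = [forall v, deg_in ends S v == 2%N] && sub_connected ends S.
Proof.
have regular_size : [forall v, deg_in ends S v == 2%N] -> #|S| = n.
  move=> /forallP deg2; apply/eqP.
  rewrite -(eqn_pmul2l (isT : (0 < 2)%N)) -sum_deg_in.
  by rewrite (eq_bigr _ (fun v _ => eqP (deg2 v))) sum_nat_const card_ord mulnC.
apply/and3P/andP => [[/forallP cyc conn /eqP size_S] | [deg2 conn]]; last first.
  split=> //; last by rewrite regular_size.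
  by apply/forallP => v; rewrite (forallP deg2 v) orbT.
split=> //.
have deg_le2 v : (deg_in ends S v <= 2)%N by case/orP: (cyc v) => /eqP ->.
have [_ <-] := leqif_sum (fun v (_ : true) => leqif_eq (deg_le2 v)).
by rewrite sum_deg_in size_S sum_nat_const card_ord mulnC.
Qed.

Lemma adjS_sym (S : {set E}) : symmetric (adjS ends S).
Proof. by move=> u v; apply: eq_existsb => e; rewrite orbC. Qed.

Lemma connect_ends (S : {set E}) u e : e \in S ->
  connect (adjS ends S) u (ends e).1 = connect (adjS ends S) u (ends e).2.
Proof.
move=> e_in_S; have adj_e : adjS ends S (ends e).1 (ends e).2.
  by apply/existsP; exists e; rewrite e_in_S -surjective_pairing eqxx.
apply/idP/idP => conn_u; apply: connect_trans conn_u (connect1 _) => //.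
by rewrite adjS_sym.
Qed.

Lemma partfun_scalar1 (C : comPzRingType) r (A : nat -> seq 'I_r -> C) :
  partfun ends (1%:M : 'M[C]_r) A =
  \sum_(c | edge_constant c)
     \prod_(v : 'I_n) A (deg ends v) [seq c h | h <- halfs_at ends v].
Proof.
rewrite /partfun [RHS]big_mkcond; apply: eq_bigr => c _.
have [/forallP const_c | /forallPn[e ne_e]] := boolP (edge_constant c).
  by rewrite big1 ?mul1r // => e _; rewrite mxE (eqP (const_c e)) eqxx.
by rewrite (bigD1 e) //= mxE (negbTE ne_e) mul0r mul0r.
Qed.

End Multigraph.

Lemma perm_eq_pair_nseq (T : eqType) (a b : T) (s : seq T) :
  all (mem [:: a; b]) s -> count_mem a s = 2%N ->
  perm_eq s [:: a, a & nseq (size s - 2) b].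
Proof.
move=> s_ab count_a; rewrite -(perm_filterC (pred1 a) s).
have /all_pred1P -> := filter_all (pred1 a) s.
have /all_pred1P -> : all (pred1 b) [seq x <- s | predC (pred1 a) x].
  rewrite all_filter; apply/allP => x /(allP s_ab).
  by rewrite !inE /= => /orP[-> | ->]; rewrite ?implybT.
by rewrite !size_filter count_a -(count_predC (pred1 a) s) count_a addKn.
Qed.

Section Colourings.
Context {R : realType} {n : nat} {E : finType} (ends : E -> 'I_n * 'I_n).
Hypothesis n_gt0 : (0 < n)%N.

Local Notation mx := (@ord_max n).
Local Notation om := (xroot R n 1).
Local Notation A := (@A_ham R n 0).
Local Notation colouring := {ffun E * bool -> 'I_n.+1}.
Local Notation connectS S := (connect (adjS ends S)).

Definition support (c : colouring) : {set E} := [set e | c (e, false) != mx].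

Definition weight (c : colouring) : R[i] :=
  \prod_(v : 'I_n) A (deg ends v) [seq c h | h <- halfs_at ends v].

Definition support_sum (S : {set E}) : R[i] :=
  \sum_(c | edge_constant c && (support c == S)) weight c.

Lemma partfun_support_sum :
  partfun ends (1%:M : 'M[R[i]]_n.+1) A = \sum_(S : {set E}) support_sum S.
Proof. by rewrite partfun_scalar1 (partition_big support predT). Qed.

Lemma mem_support c h : edge_constant c -> (h.1 \in support c) = (c h != mx).
Proof.
by move=> /forallP const_c; case: h => e [|]; rewrite inE // (eqP (const_c e)).
Qed.

Lemma weight_neq0_pattern c : weight c != 0 ->
  forall v, exists i,
    pair_pattern (deg ends v) [seq c h | h <- halfs_at ends v] i.
Proof.
move=> /prodf_neq0 weight_c v; move: (weight_c v isT).
rewrite A_hamE; set s := map _ _.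
case: ifP => _; last by rewrite eqxx.
have [i pattern_i _ | no_pattern] := pickP (pair_pattern (deg ends v) s).
  by exists i.
by rewrite big_pred0 ?eqxx.
Qed.

Lemma deg_in_support c v :
  edge_constant c -> weight c != 0 -> deg_in ends (support c) v = 2%N.
Proof.
move=> const_c /weight_neq0_pattern /(_ v)[i /andP[i_ne_mx pattern_v]].
rewrite deg_in_count (eq_count (a2 := fun h => c h != mx)) => [|h]; last first.
  by rewrite mem_support.
rewrite -(count_map c (fun x => x != mx)) (permP pattern_v) /=.
by rewrite count_nseq i_ne_mx eqxx.
Qed.

Lemma support_sum_deg_neq2 S v : deg_in ends S v != 2%N -> support_sum S = 0.
Proof.
move=> deg_v; apply: big1 => c /andP[const_c /eqP supp_c]; apply/eqP.
by apply: contraR deg_v => weight_c; rewrite -supp_c deg_in_support.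
Qed.

Definition rot_component (S : {set E}) u (c : colouring) : colouring :=
  [ffun h => if connectS S u (hend ends h) then rot_colour (c h) else c h].

Lemma rot_component_inj S u : injective (rot_component S u).
Proof.
move=> c c' /ffunP eq_cc'; apply/ffunP => h; move: (eq_cc' h); rewrite !ffunE.
by case: ifP => // _; apply: (rot_colour_inj n_gt0).
Qed.

Lemma support_rot_component S u c : support (rot_component S u c) = support c.
Proof.
apply/setP => e; rewrite !inE ffunE.
by case: ifP => // _; rewrite (rot_colour_eq_max n_gt0).
Qed.

Lemma edge_constant_rot_component S u c : support c = S ->
  edge_constant (rot_component S u c) = edge_constant c.
Proof.
move=> supp_c; apply: eq_forallb => e; rewrite !ffunE /hend /=.
have [e_in_S | e_notin_S] := boolP (e \in S).
  rewrite (connect_ends ends S u e e_in_S).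
  by case: ifP => // _; rewrite (inj_eq (rot_colour_inj n_gt0)).
have c_e : c (e, false) = mx.
  by move: e_notin_S; rewrite -supp_c inE negbK => /eqP.
rewrite c_e rot_colour_max if_same; case: ifP => // _.
by rewrite !(eq_sym mx) (rot_colour_eq_max n_gt0).
Qed.

Lemma weight_rot_component S u c :
  weight (rot_component S u c) = om ^+ #|[pred v | connectS S u v]| * weight c.
Proof.
have A_rot_v v :
    A (deg ends v) [seq rot_component S u c h | h <- halfs_at ends v] =
    (if connectS S u v then om else 1) *
    A (deg ends v) [seq c h | h <- halfs_at ends v].
  have -> : [seq rot_component S u c h | h <- halfs_at ends v] =
      if connectS S u v then map rot_colour [seq c h | h <- halfs_at ends v]
      else [seq c h | h <- halfs_at ends v].
    case: ifP => conn_uv; rewrite -?map_comp; apply/eq_in_map => h;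
      by rewrite mem_halfs_at /= ffunE => /eqP ->; rewrite conn_uv.
  by case: ifP; rewrite ?(A_ham_rot n_gt0) ?mul1r.
rewrite /weight (eq_bigr _ (fun v _ => A_rot_v v)) big_split /=.
by rewrite -big_mkcond prodr_const.
Qed.

Lemma support_sum_disconnected S u v : ~~ connectS S u v -> support_sum S = 0.
Proof.
move=> u_not_v; set k := #|[pred w | connectS S u w]|.
have k_bounds : (0 < k < n)%N.
  apply/andP; split; first by apply/card_gt0P; exists u; rewrite inE connect0.
  rewrite -[n in (_ < n)%N]card_ord -(cardC [pred w | connectS S u w]).
  rewrite -addn1 leq_add2l.
  by apply/card_gt0P; exists v; rewrite !inE.
have : support_sum S = om ^+ k * support_sum S.
  rewrite {1}/support_sum (reindex_inj (@rot_component_inj S u)) /= mulr_sumr.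
  apply: eq_big => c; last by rewrite weight_rot_component.
  rewrite support_rot_component.
  case: (support c =P S) => [supp_c | _]; last by rewrite !andbF.
  by rewrite edge_constant_rot_component.
move/eqP; rewrite -subr_eq0 -{1}[support_sum S]mul1r -mulrBl mulf_eq0.
rewrite subr_eq0 eq_sym.
by rewrite (negbTE (xroot1_expr_neq1 R n k k_bounds)) => /eqP.
Qed.

Definition const_colouring (S : {set E}) (i : 'I_n.+1) : colouring :=
  [ffun h => if h.1 \in S then i else mx].

Lemma const_colouring_support S i : i != mx ->
  edge_constant (const_colouring S i) && (support (const_colouring S i) == S).
Proof.
move=> i_ne_mx; apply/andP; split; first by apply/forallP => e; rewrite !ffunE.
apply/eqP/setP => e; rewrite inE ffunE /=.
by case: (e \in S); rewrite ?i_ne_mx ?eqxx.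
Qed.

Lemma weight_const_colouring S i : i != mx ->
  (forall v, deg_in ends S v = 2%N) -> weight (const_colouring S i) = 1.
Proof.
move=> i_ne_mx deg2.
have A_v v : A (deg ends v) [seq const_colouring S i h | h <- halfs_at ends v] =
             xroot R n i.+1.
  set s := map _ _.
  have count_i : count_mem i s = 2%N.
    rewrite count_map -(deg2 v) deg_in_count; apply: eq_count => h.
    rewrite /= ffunE; case: (h.1 \in S); rewrite ?eqxx //.
    by rewrite eq_sym (negbTE i_ne_mx).
  have size_s : size s = deg ends v by rewrite size_map.
  have pattern_i : pair_pattern (deg ends v) s i.
    rewrite /pair_pattern i_ne_mx -size_s perm_eq_pair_nseq //.
    apply/allP => _ /mapP[h _ ->]; rewrite ffunE !inE.
    by case: (_ \in S); rewrite eqxx ?orbT.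
  have deg_gt1 : (1 < deg ends v)%N by rewrite -size_s -count_i count_size.
  rewrite A_hamE deg_gt1 (big_pred1 i) // => j.
  apply/idP/eqP => [pattern_j | ->] //.
  exact: pair_pattern_uniq pattern_j pattern_i.
rewrite /weight (eq_bigr _ (fun v _ => A_v v)) prodr_const card_ord xrootE.
rewrite -exprM mulnC exprM.
by rewrite (prim_expr_order (xroot1_primitive R n n_gt0)) expr1n.
Qed.

Lemma const_colouring_of_connected S c :
  edge_constant c -> support c = S -> weight c != 0 ->
  (forall u v, connectS S u v) -> exists2 i, i != mx & c = const_colouring S i.
Proof.
move=> const_c supp_c /weight_neq0_pattern pattern_c conn_S.
have [f pattern_f] := fin_all_exists pattern_c.
have c_f h : h.1 \in S -> c h = f (hend ends h).
  move=> h_in_S; have /andP[_ perm_h] := pattern_f (hend ends h).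
  have : c h \in [seq c h | h <- halfs_at ends (hend ends h)].
    by rewrite map_f // mem_halfs_at.
  rewrite (perm_mem perm_h) !inE mem_nseq.
  case/or3P=> [/eqP // | /eqP // | /andP[_ /eqP c_h]].
  by move: h_in_S; rewrite -supp_c mem_support // c_h eqxx.
set v0 := Ordinal n_gt0.
have f_const w : f w = f v0.
  have f_closed : fingraph.closed (adjS ends S) [pred x | f x == f v0].
    move=> x y /existsP[e /andP[e_in_S ends_e]].
    have f_e : f (ends e).1 = f (ends e).2.
      rewrite -(c_f (e, false)) // -(c_f (e, true)) //.
      exact/eqP/(forallP const_c e).
    case/orP: ends_e => /eqP ends_e; rewrite ends_e /= in f_e;
      by rewrite !inE f_e.
  have := closed_connect f_closed (conn_S v0 w).
  by rewrite !inE eqxx => /esym /eqP.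
exists (f v0); first by case/andP: (pattern_f v0).
apply/ffunP => h; rewrite ffunE; case: ifP => [h_in_S | h_notin_S].
  by rewrite c_f ?f_const.
by apply/eqP; move: h_notin_S; rewrite -supp_c mem_support // => /negbFE.
Qed.

Lemma support_sum_connected S : (forall v, deg_in ends S v = 2%N) ->
  (forall u v, connectS S u v) -> support_sum S = n%:R.
Proof.
move=> deg2 conn_S; set consts := [set const_colouring S i | i in [set~ mx]].
have [e0 e0_in_S] : exists e0, e0 \in S.
  have : has (fun h : E * bool => h.1 \in S) (halfs_at ends (Ordinal n_gt0)).
    by rewrite has_count -deg_in_count deg2.
  by case/hasP => h _; exists h.1.
have const_inj : {in [set~ mx] &, injective (const_colouring S)}.
  by move=> i j _ _ /ffunP/(_ (e0, false)); rewrite !ffunE /= e0_in_S.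
rewrite /support_sum (bigID (mem consts)) /= [X in _ + X]big1 ?addr0; last first.
  move=> c /andP[/andP[const_c /eqP supp_c] not_const]; apply/eqP.
  apply: contraR not_const => weight_c.
  have [i i_ne_mx ->] :=
    const_colouring_of_connected S c const_c supp_c weight_c conn_S.
  by apply/imsetP; exists i; rewrite ?in_setC1.
rewrite (eq_bigl (fun c => c \in consts)) => [|c]; last first.
  apply/idP/idP => [/andP[] // | c_const]; rewrite c_const andbT.
  case/imsetP: c_const => i; rewrite in_setC1 => i_ne_mx ->.
  exact: const_colouring_support.
rewrite big_imset //= (eq_bigr (fun=> 1)) => [|i]; last first.
  by rewrite in_setC1 => i_ne_mx; apply: weight_const_colouring.
by rewrite sumr_const cardsC1 card_ord.
Qed.

Lemma support_sumE S : support_sum S = if hamiltonian ends S then n%:R else 0.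
Proof.
rewrite hamiltonianE.
have [/forallP deg2 | /forallPn[v deg_v]] /= :=
  boolP [forall v, deg_in ends S v == 2%N]; last first.
  exact: support_sum_deg_neq2 deg_v.
have [conn_S | /forallPn[u /forallPn[v]]] := boolP (sub_connected ends S).
  apply: support_sum_connected => [v | u v]; first exact/eqP.
  by move/forallP: conn_S => /(_ u) /forallP /(_ v); rewrite !(eqP (deg2 _)).
by rewrite negb_imply => /andP[_]; apply: support_sum_disconnected.
Qed.

End Colourings.

Theorem corollary3 (R : realType) (n : nat) (E : finType)
  (ends : E -> 'I_n * 'I_n) :
  (1 <= n)%N ->
  (forall v : 'I_n, (1 <= deg ends v)%N) ->
  (#|[set S : {set E} | hamiltonian ends S]|%:R : R[i]) =
    n%:R^-1 * partfun ends (1%:M : 'M[R[i]]_n.+1) (@A_ham R n 0).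
Proof.
move=> n_gt0 _.
rewrite partfun_support_sum (eq_bigr _ (fun S _ => support_sumE ends n_gt0 S)).
rewrite -big_mkcond sumr_const mulrnAr mulVf ?pnatr_eq0 -?lt0n //.
by rewrite cardsE.
Qed.
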